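(* Let $\Pi$ be a finite set of propositional variables and let $M^1=\langle W^1,\mathcal{N}^1,V^1\rangle$, $M^2=\langle W^2,\mathcal{N}^2,V^2\rangle$ be nIML1-models for the language over $\Pi$. Let $n\geq 0$. For every $w_1\in W^1$ and $w_2\in W^2$ the following are equivalent: (1) $w_1$ and $w_2$ are $n$-bisimilar; (2) $w_1$ and $w_2$ agree on all formulas (over $\Pi$) of degree at most $n$, i.e. for each such formula $\varphi$, $w_1\Vdash_{M^1}\varphi$ iff $w_2\Vdash_{M^2}\varphi$.
   Context: Formulas over $\Pi$ are built from the variables in $\Pi$ and $\bot$ using binary $\land,\lor,\rightarrow,\rightsquigarrow$ and unary $\Delta$ ($\sim\varphi$ abbreviates $\varphi\rightsquigarrow\bot$). An nIML1-model for this language is a triple $\langle W,\mathcal{N},V\rangle$ with $W\neq\emptyset$, $\mathcal{N}:W\to P(P(W))$ satisfying for all $w$: (a) $w\in\bigcap\mathcal{N}_w$; (b) $\bigcap\mathcal{N}_w\in\mathcal{N}_w$; (c) $u\in\bigcap\mathcal{N}_w\Rightarrow\bigcap\mathcal{N}_u\subseteq\bigcap\mathcal{N}_w$; (d) $\bigcap\mathcal{N}_w\subseteq X\subseteq\bigcup\mathcal{N}_w\Rightarrow X\in\mathcal{N}_w$; (e) $u\in\bigcap\mathcal{N}_w\Rightarrow\bigcup\mathcal{N}_u\subseteq\bigcup\mathcal{N}_w$ ($\bigcap\mathcal{N}_w$, $\bigcup\mathcal{N}_w$ the intersection and union of the family $\mathcal{N}_w$), and $V:\Pi\to P(W)$ with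 $w\in V(q)\Rightarrow\bigcap\mathcal{N}_w\subseteq V(q)$. Forcing: atoms via $V$; $\bot$ never; $\land,\lor$ pointwise; $w\Vdash\varphi\rightarrow\psi$ iff every $v\in\bigcap\mathcal{N}_w$ has $v\nVdash\varphi$ or $v\Vdash\psi$; $w\Vdash\varphi\rightsquigarrow\psi$ iff every $v\in\bigcup\mathcal{N}_w$ has $v\nVdash\varphi$ or $v\Vdash\psi$; $w\Vdash\Delta\varphi$ iff every $v\in\bigcup\mathcal{N}_w$ has $v\Vdash\varphi$. Degree: $deg(q)=deg(\bot)=0$; $deg(\varphi\land\psi)=deg(\varphi\lor\psi)=\max(deg\varphi,deg\psi)$; $deg(\varphi\rightarrow\psi)=deg(\varphi\rightsquigarrow\psi)=1+\max(deg\varphi,deg\psi)$; $deg(\Delta\varphi)=1+deg\varphi$. Worlds $w_1\in W^1$, $w_2\in W^2$ are $n$-bisimilar if there are relations $R_n\subseteq R_{n-1}\subseteq\dots\subseteq R_0\subseteq W^1\times W^2$ such that: $w_1R_nw_2$; whenever $xR_0y$, $x$ and $y$ force the same propositional variables; and for each $i$ with $i+1\leq n$ and all $x_1,x_2$ with $x_1R_{i+1}x_2$: for every $y\in\bigcap\mathcal{N}^2_{x_2}$ there is $x\in\bigcap\mathcal{N}^1_{x_1}$ with $xR_iy$; for every $y\in\bigcup\mathcal{N}^2_{x_2}$ there is $x\in\bigcup\mathcal{N}^1_{x_1}$ with $xR_iy$; for every $x\in\bigcap\mathcal{N}^1_{x_1}$ there is $y\in\bigcap\mathcal{N}^2_{x_2}$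 with $xR_iy$; for every $x\in\bigcup\mathcal{N}^1_{x_1}$ there is $y\in\bigcup\mathcal{N}^2_{x_2}$ with $xR_iy$. *)

From Stdlib Require Import List Arith.

Set Implicit Arguments.

Inductive form (P : Type) : Type :=
| Var : P -> form P
| Bot : form P
| And : form P -> form P -> form P
| Or : form P -> form P -> form P
| Imp : form P -> form P -> form P
| SImp : form P -> form P -> form P
| Delta : form P -> form P.

Arguments Bot {P}.

Definition Neg (P : Type) (phi : form P) : form P := SImp phi Bot.

Fixpoint deg (P : Type) (phi : form P) : nat :=
  match phi with
  | Var _ => 0
  | Bot => 0
  | And a b => Nat.max (deg a) (deg b)
  | Or a b => Nat.max (deg a) (deg b)
  | Imp a b => S (Nat.max (deg a) (deg b))
  | SImp a b => S (Nat.max (deg a) (deg b))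
  | Delta a => S (deg a)
  end.

Definition bigcap (W : Type) (F : (W -> Prop) -> Prop) : W -> Prop :=
  fun x => forall X, F X -> X x.
Definition bigcup (W : Type) (F : (W -> Prop) -> Prop) : W -> Prop :=
  fun x => exists X, F X /\ X x.

Record model (P : Type) : Type := Model {
  world : Type;
  world_inhabited : inhabited world;
  nbh : world -> (world -> Prop) -> Prop;
  val : P -> world -> Prop;
  cond_a : forall w, bigcap (nbh w) w;
  cond_b : forall w, nbh w (bigcap (nbh w));
  cond_c : forall w u, bigcap (nbh w) u ->
             forall v, bigcap (nbh u) v -> bigcap (nbh w) v;
  cond_d : forall w (X : world -> Prop),
             (forall v, bigcap (nbh w) v -> X v) ->
             (forall v, X v -> bigcup (nbh w) v) -> nbh w X;
  cond_e : forall w u, bigcap (nbh w) u ->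
             forall v, bigcup (nbh u) v -> bigcup (nbh w) v;
  val_persist : forall q w, val q w -> forall v, bigcap (nbh w) v -> val q v
}.

Arguments world {P}.
Arguments nbh {P}.
Arguments val {P}.

Definition core (P : Type) (M : model P) (w : world M) := bigcap (nbh M w).
Definition region (P : Type) (M : model P) (w : world M) := bigcup (nbh M w).

Fixpoint forces (P : Type) (M : model P) (w : world M) (phi : form P) : Prop :=
  match phi with
  | Var q => val M q w
  | Bot => False
  | And a b => forces M w a /\ forces M w b
  | Or a b => forces M w a \/ forces M w b
  | Imp a b => forall v, core M w v -> ~ forces M v a \/ forces M v b
  | SImp a b => forall v, region M w v -> ~ forces M v a \/ forces M v b
  | Delta a => forall v, region M w v -> forces M v a
  end.

Definition n_bisimilar (P : Type) (M1 M2 : model P) (n : nat)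
    (w1 : world M1) (w2 : world M2) : Prop :=
  exists R : nat -> world M1 -> world M2 -> Prop,
    R n w1 w2 /\
    (forall i, i < n -> forall x y, R (S i) x y -> R i x y) /\
    (forall x y, R 0 x y -> forall q, val M1 q x <-> val M2 q y) /\
    (forall i, i + 1 <= n -> forall x1 x2, R (S i) x1 x2 ->
       (forall y, core M2 x2 y -> exists x, core M1 x1 x /\ R i x y) /\
       (forall y, region M2 x2 y -> exists x, region M1 x1 x /\ R i x y) /\
       (forall x, core M1 x1 x -> exists y, core M2 x2 y /\ R i x y) /\
       (forall x, region M1 x1 x -> exists y, region M2 x2 y /\ R i x y)).

Definition finite_type (T : Type) : Prop := exists l : list T, forall x, In x l.

From Stdlib Require Import List Arith Lia Classical.
Import ListNotations.

(* Soundness is an induction on the degree: the back-and-forth clauses transfer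
   the three modal connectives, whose arguments have smaller degree.
   Conversely, agreement on formulas of degree at most i is itself an
   n-bisimulation. With finitely many variables, agreement at degree i is
   decided by a finite list L of formulas of degree i. The L-type (T, F) of a
   world is captured one degree higher by /\T -> \/F and /\T ~> \/F: some core
   (resp. region) world has type (T, F) iff the first (resp. second) formula
   fails, so worlds agreeing at degree i+1 have matching successors. *)

Section Splits.
Context {A : Type}.

Fixpoint splits (L : list A) : list (list A * list A) :=
  match L with
  | [] => [([], [])]
  | p :: L' => map (fun TF => (p :: fst TF, snd TF)) (splits L')
               ++ map (fun TF => (fst TF, p :: snd TF)) (splits L')
  end.

Lemma in_splits {L TF} :
  In TF (splits L) -> forall p, In p L <-> In p (fst TF) \/ In p (snd TF).
Proof.
  revert TF; induction L as [|q L IH]; simpl; intros TF HTF p.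
  - destruct HTF as [<- | []]; simpl; tauto.
  - apply in_app_or in HTF.
    destruct HTF as [HTF | HTF]; apply in_map_iff in HTF;
      destruct HTF as [[T F] [<- HTF]]; simpl; rewrite (IH _ HTF p); simpl; tauto.
Qed.

Lemma splits_separate (Q : A -> Prop) L :
  exists TF, In TF (splits L) /\
    (forall p, In p (fst TF) -> Q p) /\ (forall p, In p (snd TF) -> ~ Q p).
Proof.
  induction L as [|q L [[T F] [HTF [HT HF]]]]; simpl.
  - exists ([], []); simpl; tauto.
  - destruct (classic (Q q)) as [Hq | Hq].
    + exists (q :: T, F); split; [apply in_or_app; left; exact (in_map _ _ _ HTF)|].
      simpl; split; [intros p [<- | Hp]|]; auto.
    + exists (T, q :: F); split; [apply in_or_app; right; exact (in_map _ _ _ HTF)|].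
      simpl; split; [|intros p [<- | Hp]]; auto.
Qed.

End Splits.

Lemma forall_transfer {A B : Type} (KA : A -> Prop) (KB : B -> Prop) (R : A -> B -> Prop)
  (QA : A -> Prop) (QB : B -> Prop) :
  (forall b, KB b -> exists a, KA a /\ R a b) ->
  (forall a, KA a -> exists b, KB b /\ R a b) ->
  (forall a b, R a b -> (QA a <-> QB b)) ->
  (forall a, KA a -> QA a) <-> (forall b, KB b -> QB b).
Proof.
  intros Hback Hforth HQ; split.
  - intros H b Hb; destruct (Hback b Hb) as [a [Ha Hab]]; apply (HQ a b Hab); auto.
  - intros H a Ha; destruct (Hforth a Ha) as [b [Hb Hab]]; apply (HQ a b Hab); auto.
Qed.

Section Agreement.
Context {P : Type}.
Implicit Types (M : model P) (phi : form P) (L T F : list (form P)).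

Lemma forces_persist {M phi} {w v : world M} :
  forces M w phi -> core M w v -> forces M v phi.
Proof.
  revert w v; induction phi; simpl; intros w v Hw Hwv.
  - exact (val_persist M p w Hw Hwv).
  - exact Hw.
  - destruct Hw; split; eauto.
  - destruct Hw; [left | right]; eauto.
  - intros u Hvu; apply Hw; exact (cond_c M w Hwv Hvu).
  - intros u Hvu; apply Hw; exact (cond_e M w Hwv Hvu).
  - intros u Hvu; apply Hw; exact (cond_e M w Hwv Hvu).
Qed.

Definition access M (strict : bool) : world M -> world M -> Prop :=
  if strict then region M else core M.

Lemma forces_arrow M (strict : bool) (x : world M) phi psi :
  forces M x ((if strict then @SImp P else @Imp P) phi psi) <->
  forall v, access M strict x v -> forces M v phi -> forces M v psi.
Proof.
  destruct strict; simpl; split; intros H v Hv; specialize (H v Hv);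
    destruct (classic (forces M v phi)); tauto.
Qed.

Definition bigAnd (p : form P) T : form P := fold_right (@And P) p T.
Definition bigOr F : form P := fold_right (@Or P) Bot F.

Lemma forces_bigAnd M (x : world M) p T :
  forces M x (bigAnd p T) <-> forall q, In q (p :: T) -> forces M x q.
Proof.
  unfold bigAnd; induction T as [|t T IH]; simpl.
  - split; [intros H q [<- | []]; exact H | auto].
  - rewrite IH; simpl; split.
    + intros [Ht Hs] q [<- | [<- | Hq]]; auto.
    + intros H; split; [|intros q [<- | Hq]]; apply H; simpl; auto.
Qed.

Lemma forces_bigOr M (x : world M) F :
  forces M x (bigOr F) <-> exists q, In q F /\ forces M x q.
Proof.
  unfold bigOr; induction F as [|f F IH]; simpl.
  - split; [tauto | intros [q [[] _]]].
  - rewrite IH; split.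
    + intros [Hf | [q [Hq Hx]]]; eauto.
    + intros [q [[<- | Hq] Hx]]; eauto.
Qed.

Lemma deg_bigAnd p T i :
  (forall q, In q (p :: T) -> deg q <= i) -> deg (bigAnd p T) <= i.
Proof.
  unfold bigAnd; induction T as [|t T IH]; simpl; intros H.
  - exact (H p (or_introl eq_refl)).
  - apply Nat.max_lub; [apply H | apply IH; intros q [<- | Hq]; apply H]; simpl; auto.
Qed.

Lemma deg_bigOr F i : (forall q, In q F -> deg q <= i) -> deg (bigOr F) <= i.
Proof.
  unfold bigOr; induction F as [|f F IH]; simpl; intros H; [lia|].
  apply Nat.max_lub; auto.
Qed.

(* An empty premise is dropped rather than replaced by a constant truth, which
   would cost a degree (there is none of degree 0); the non-strict formula then
   needs no modality, because forcing persists along cores. *)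
Definition chi (strict : bool) (TF : list (form P) * list (form P)) : form P :=
  match fst TF with
  | [] => if strict then Delta (bigOr (snd TF)) else bigOr (snd TF)
  | p :: T => (if strict then @SImp P else @Imp P) (bigAnd p T) (bigOr (snd TF))
  end.

Definition realizes {M} (x : world M) (TF : list (form P) * list (form P)) : Prop :=
  (forall p, In p (fst TF) -> forces M x p) /\ (forall p, In p (snd TF) -> ~ forces M x p).

Lemma forces_chi M (strict : bool) (x : world M) TF :
  forces M x (chi strict TF) <-> ~ exists v, access M strict x v /\ realizes v TF.
Proof.
  assert (Hbox : forces M x (chi strict TF) <->
    forall v, access M strict x v -> (forall p, In p (fst TF) -> forces M v p) ->
      forces M v (bigOr (snd TF))).
  { unfold chi; destruct TF as [[|p T] F]; simpl.
    - destruct strict; simpl; split.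
      + intros H v Hv _; exact (H v Hv).
      + intros H v Hv; apply H; [exact Hv | intros p []].
      + intros H v Hv _; exact (forces_persist H Hv).
      + intros H; apply (H x (cond_a M x)); intros p [].
    - rewrite forces_arrow; setoid_rewrite forces_bigAnd; reflexivity. }
  rewrite Hbox; unfold realizes; split.
  - intros H [v [Hv [HT HF]]].
    destruct (proj1 (forces_bigOr M v _) (H v Hv HT)) as [q [Hq Hvq]].
    exact (HF q Hq Hvq).
  - intros H v Hv HT; apply NNPP; intros Hn; apply H; exists v.
    split; [exact Hv|]; split; [exact HT|].
    intros q Hq Hvq; apply Hn, forces_bigOr; eauto.
Qed.

Lemma deg_chi (strict : bool) TF i :
  (forall p, In p (fst TF) \/ In p (snd TF) -> deg p <= i) -> deg (chi strict TF) <= S i.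
Proof.
  intros H; destruct TF as [[|p T] F]; unfold chi; simpl in *.
  - assert (deg (bigOr F) <= i) by (apply deg_bigOr; auto); destruct strict; simpl; lia.
  - assert (deg (bigAnd p T) <= i) by (apply deg_bigAnd; auto).
    assert (deg (bigOr F) <= i) by (apply deg_bigOr; auto).
    destruct strict; simpl; lia.
Qed.

Definition chis L : list (form P) :=
  flat_map (fun strict => map (chi strict) (splits L)) [false; true].

Lemma in_chis (strict : bool) {L TF} : In TF (splits L) -> In (chi strict TF) (chis L).
Proof.
  intros HTF; apply in_flat_map; exists strict.
  split; [destruct strict; simpl; auto | exact (in_map _ _ _ HTF)].
Qed.

Lemma deg_chis {L i} :
  (forall p, In p L -> deg p <= i) -> forall phi, In phi (chis L) -> deg phi <= S i.
Proof.
  intros HL phi Hphi; apply in_flat_map in Hphi.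
  destruct Hphi as [strict [_ Hphi]]; apply in_map_iff in Hphi.
  destruct Hphi as [TF [<- HTF]].
  apply deg_chi; intros p Hp; apply HL, (in_splits HTF); exact Hp.
Qed.

Section TwoModels.
Context {M1 M2 : model P}.

Definition agree_on (S : form P -> Prop) (x1 : world M1) (x2 : world M2) : Prop :=
  forall phi, S phi -> (forces M1 x1 phi <-> forces M2 x2 phi).

Definition agree_deg (i : nat) := agree_on (fun phi => deg phi <= i).

Definition agree_vars (x1 : world M1) (x2 : world M2) : Prop :=
  forall q, val M1 q x1 <-> val M2 q x2.

Definition zigzag (R : world M1 -> world M2 -> Prop) (x1 : world M1) (x2 : world M2) :=
  (forall y, core M2 x2 y -> exists x, core M1 x1 x /\ R x y) /\
  (forall y, region M2 x2 y -> exists x, region M1 x1 x /\ R x y) /\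
  (forall x, core M1 x1 x -> exists y, core M2 x2 y /\ R x y) /\
  (forall x, region M1 x1 x -> exists y, region M2 x2 y /\ R x y).

(* [n_bisimilar M1 M2 n w1 w2] unfolds to [exists R, R n w1 w2 /\ bisimulation n R]. *)
Definition bisimulation (n : nat) (R : nat -> world M1 -> world M2 -> Prop) : Prop :=
  (forall i, i < n -> forall x y, R (S i) x y -> R i x y) /\
  (forall x y, R 0 x y -> agree_vars x y) /\
  (forall i, i + 1 <= n -> forall x1 x2, R (S i) x1 x2 -> zigzag (R i) x1 x2).

Lemma zigzag_mono (R R' : world M1 -> world M2 -> Prop) x1 x2 :
  (forall x y, R x y -> R' x y) -> zigzag R x1 x2 -> zigzag R' x1 x2.
Proof.
  intros HR [Bc [Br [Fc Fr]]]; repeat split.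
  - intros y Hy; destruct (Bc y Hy) as [x [Hx Hxy]]; eauto.
  - intros y Hy; destruct (Br y Hy) as [x [Hx Hxy]]; eauto.
  - intros x Hx; destruct (Fc x Hx) as [y [Hy Hxy]]; eauto.
  - intros x Hx; destruct (Fr x Hx) as [y [Hy Hxy]]; eauto.
Qed.

Lemma agree_deg_0 {x1 x2} : agree_vars x1 x2 -> agree_deg 0 x1 x2.
Proof.
  intros Hv phi; induction phi; simpl; intros Hd.
  - apply Hv.
  - tauto.
  - rewrite IHphi1, IHphi2 by lia; tauto.
  - rewrite IHphi1, IHphi2 by lia; tauto.
  - lia.
  - lia.
  - lia.
Qed.

Lemma agree_deg_S i x1 x2 :
  agree_vars x1 x2 -> zigzag (agree_deg i) x1 x2 -> agree_deg (S i) x1 x2.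
Proof.
  intros Hv [Bc [Br [Fc Fr]]] phi; induction phi; simpl; intros Hd.
  - apply Hv.
  - tauto.
  - rewrite IHphi1, IHphi2 by lia; tauto.
  - rewrite IHphi1, IHphi2 by lia; tauto.
  - apply forall_transfer with (R := agree_deg i); auto.
    intros u v Huv; rewrite (Huv phi1), (Huv phi2) by lia; tauto.
  - apply forall_transfer with (R := agree_deg i); auto.
    intros u v Huv; rewrite (Huv phi1), (Huv phi2) by lia; tauto.
  - apply forall_transfer with (R := agree_deg i); auto.
    intros u v Huv; apply Huv; lia.
Qed.

Lemma bisimulation_agree {n R} :
  bisimulation n R -> forall k, k <= n -> forall x1 x2, R k x1 x2 -> agree_deg k x1 x2.
Proof.
  intros [Hmono [Hvars Hzig]] k; induction k as [|k IH]; intros Hk x1 x2 Hx.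
  - exact (agree_deg_0 (Hvars x1 x2 Hx)).
  - assert (Hagree : agree_deg k x1 x2) by (apply IH; [lia | apply Hmono; [lia | exact Hx]]).
    apply agree_deg_S.
    + intros q; exact (Hagree (Var q) (Nat.le_0_l k)).
    + apply zigzag_mono with (R k); [intros x y; apply IH; lia | apply Hzig; [lia | exact Hx]].
Qed.

End TwoModels.

Lemma agree_on_sym {S : form P -> Prop} {M1 M2} {x1 : world M1} {x2 : world M2} :
  agree_on S x1 x2 -> agree_on S x2 x1.
Proof. intros H phi Hphi; symmetry; auto. Qed.

Lemma agree_of_realizes {L TF M1 M2} {x1 : world M1} {x2 : world M2} :
  In TF (splits L) -> realizes x1 TF -> realizes x2 TF -> agree_on (fun p => In p L) x1 x2.
Proof.
  intros HTF [HT1 HF1] [HT2 HF2] p Hp.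
  destruct (proj1 (in_splits HTF p) Hp) as [Hp' | Hp'].
  - split; auto.
  - split; intros H; exfalso; [exact (HF1 p Hp' H) | exact (HF2 p Hp' H)].
Qed.

Definition deg_basis (i : nat) L : Prop :=
  (forall p, In p L -> deg p <= i) /\
  forall M1 M2 (x1 : world M1) (x2 : world M2),
    agree_on (fun p => In p L) x1 x2 -> agree_deg i x1 x2.

Lemma chi_forth (strict : bool) {L i M1 M2} {x1 : world M1} {x2 : world M2} :
  deg_basis i L -> agree_on (fun phi => In phi (chis L)) x1 x2 ->
  forall x, access M1 strict x1 x -> exists y, access M2 strict x2 y /\ agree_deg i x y.
Proof.
  intros [_ HL] Hchis x Hx.
  destruct (splits_separate (forces M1 x) L) as [TF [HTF Hx_TF]].
  assert (H2 : ~ forces M2 x2 (chi strict TF)).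
  { rewrite <- (Hchis _ (in_chis strict HTF)), forces_chi.
    intros Hn; apply Hn; exists x; split; assumption. }
  rewrite forces_chi in H2; apply NNPP in H2.
  destruct H2 as [y [Hy Hy_TF]].
  exists y; split; [exact Hy|].
  apply HL; exact (agree_of_realizes HTF Hx_TF Hy_TF).
Qed.

Lemma zigzag_of_agree_chis {L i M1 M2} {x1 : world M1} {x2 : world M2} :
  deg_basis i L -> agree_on (fun phi => In phi (chis L)) x1 x2 ->
  zigzag (agree_deg i) x1 x2.
Proof.
  intros HL H; repeat split.
  - intros y Hy; destruct (chi_forth false HL (agree_on_sym H) y Hy) as [x [Hx Hxy]].
    exists x; split; [exact Hx | exact (agree_on_sym Hxy)].
  - intros y Hy; destruct (chi_forth true HL (agree_on_sym H) y Hy) as [x [Hx Hxy]].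
    exists x; split; [exact Hx | exact (agree_on_sym Hxy)].
  - exact (chi_forth false HL H).
  - exact (chi_forth true HL H).
Qed.

Section FiniteVariables.
Hypothesis P_finite : finite_type P.

Lemma deg_basis_exists i : exists L, deg_basis i L.
Proof.
  destruct P_finite as [vars Hvars].
  assert (Hagree_vars : forall L M1 M2 (x1 : world M1) (x2 : world M2),
    incl (map (@Var P) vars) L -> agree_on (fun p => In p L) x1 x2 -> agree_vars x1 x2).
  { intros L M1 M2 x1 x2 HL H q; apply (H (Var q)), HL, in_map, Hvars. }
  induction i as [|i [L [HLdeg HL]]].
  - exists (map (@Var P) vars); split.
    + intros p Hp; apply in_map_iff in Hp; destruct Hp as [q [<- _]]; simpl; lia.
    + intros M1 M2 x1 x2 H; apply agree_deg_0, (Hagree_vars _ _ _ _ _ (incl_refl _) H).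
  - exists (map (@Var P) vars ++ chis L); split.
    + intros p Hp; apply in_app_or in Hp; destruct Hp as [Hp | Hp].
      * apply in_map_iff in Hp; destruct Hp as [q [<- _]]; simpl; lia.
      * exact (deg_chis HLdeg p Hp).
    + intros M1 M2 x1 x2 H; apply agree_deg_S; [exact (Hagree_vars _ _ _ _ _ (incl_appl _ (incl_refl _)) H)|].
      apply (zigzag_of_agree_chis (L := L)); [split; assumption|].
      intros phi Hphi; apply H, in_or_app; right; exact Hphi.
Qed.

Lemma agree_deg_bisimulation M1 M2 n : bisimulation n (@agree_deg M1 M2).
Proof.
  split; [|split].
  - intros i _ x y H phi Hphi; apply H; lia.
  - intros x y H q; exact (H (Var q) (le_n 0)).
  - intros i _ x1 x2 H.
    destruct (deg_basis_exists i) as [L [HLdeg HL]].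
    apply (zigzag_of_agree_chis (L := L)); [split; assumption|].
    intros phi Hphi; apply H; exact (deg_chis HLdeg phi Hphi).
Qed.

End FiniteVariables.

End Agreement.

Theorem theorem7p4 (P : Type) (HP : finite_type P) (M1 M2 : model P) (n : nat)
  (w1 : world M1) (w2 : world M2) :
  n_bisimilar M1 M2 n w1 w2 <->
  (forall phi : form P, deg phi <= n -> (forces M1 w1 phi <-> forces M2 w2 phi)).
Proof.
  split.
  - intros [R [HR Hbisim]]; exact (bisimulation_agree Hbisim n (le_n n) w1 w2 HR).
  - intros H; exists (@agree_deg P M1 M2); split; [exact H|].
    exact (agree_deg_bisimulation HP M1 M2 n).
Qed.
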